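(* Let $\mathbf{R}^{\mathrm{o}}$ be a finite set of obligations and let $\mathbf{R}=(\emptyset,\mathbf{R}^{\mathrm{o}})$ (no normality conditionals). Let the overriding relation $\triangleright$ be computed relative to $\Gamma=\emptyset$, and let entailment $\mid\sim$ range over replete $\mathbf{R}$-ordered models. Then for all Boolean formulas $a,x$: $$(\emptyset,\mathbf{R})\mid\sim \bigcirc_{\mathrm{H}}(x/a)\quad\text{iff}\quad x\in\bigcap\mathit{outf}(\mathbf{R}^{\mathrm{o}}_{\triangleright},a,\{a\}),$$ where the underlying I/O operation is $out_4^{+}$.
   Context: Boolean formulas are built from propositional letters with the classical connectives; $\models_{\mathrm{PL}}$ is classical propositional entailment, $\models_{\mathrm{S5}}$ entailment in modal logic S5; a Boolean $A$ is PL-consistent if $A\not\models_{\mathrm{PL}}\bot$. An obligation is a formula $\bigcirc(B/A)$ with $A,B$ Boolean (''$B$ ought to be the case given $A$''); its body is $b(\bigcirc(B/A))=A$ and head $h(\bigcirc(B/A))=B$. Overriding relative to a set $\Gamma$ of alethic formulas: for obligations $r_i,r_j\in\mathbf{R}^{\mathrm{o}}$, $r_j\triangleright r_i$ iff (i) $\{h(r_i),h(r_j)\}\cup\Gamma\models_{\mathrm{S5}}\bot$; (ii) $b(r_j)\models_{\mathrm{PL}}b(r_i)$ and $b(r_i)\not\models_{\mathrm{PL}}b(r_j)$; (iii) $\{h(r_i),b(r_j)\}\not\models_{\mathrm{PL}}\bot$. An $\mathbf{R}$-ordered model (here with no normality conditionals) is $M=(W,\succeq_N,\succeq_I,v)$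 with $W\neq\emptyset$, $v$ a valuation assigning to each world the set of letters true there (Boolean formulas evaluated classically), $\succeq_N=W\times W$, and $\succeq_I$ defined by $w_1\succeq_I w_2$ iff $V(w_1)\subseteq V(w_2)$, where the violation set is $V(w)=\{r_i\in\mathbf{R}^{\mathrm{o}}: w\models b(r_i)\wedge\neg h(r_i)$ and $w\not\models b(r_j)$ for every $r_j\in\mathbf{R}^{\mathrm{o}}$ with $r_j\triangleright r_i\}$. For a preorder $\succeq$ and $X\subseteq W$, $\max_{\succeq}(X)=\{w\in X:\forall u\in X\,(u\succeq w\Rightarrow w\succeq u)\}$; $\Vert A\Vert$ is the set of worlds where $A$ holds. $M$ is replete if every PL-consistent Boolean formula holds at some world of $M$. The Hanssonian operator: $w\models\bigcirc_{\mathrm{H}}(x/a)$ iff $\max_{\succeq_I}(\Vert a\Vert)\subseteq\Vert x\Vert$. For a theory $(\Gamma,\mathbf{R})$, $(\Gamma,\mathbf{R})\mid\sim\varphi$ iff for every (replete) $\mathbf{R}$-ordered model $M$ and world $w$ of $M$, if $w$ satisfies every formula in $\Gamma$ then $w\models\varphi$. I/O logic: a norm is a pair $(a,x)$ of Boolean formulas; for a set $H$ of norms, $\mathrm{m}(H)=\{a\rightarrow x:(a,x)\in H\}$, and $out_4^{+}(H,a)=\{x:\{a\}\cup\mathrm{m}(H)\models_{\mathrm{PL}}x\}$. For a set $N$ of norms, input $a$ and set $C$ of formulas, $\mathit{maxf}(N,a,C)$ is the set of $\subseteq$-maximal $H\subseteq N$ such that $out_4^{+}(H,a)\cup C$ is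 PL-consistent; $\mathit{outf}(N,a,C)=\{out_4^{+}(H,a):H\in\mathit{maxf}(N,a,C)\}$; $\bigcap\mathit{outf}(N,a,C)$ is the intersection of this family. Translation: for $r_i=\bigcirc(x/a)\in\mathbf{R}^{\mathrm{o}}$ let $D(r_i)=\{r_j\in\mathbf{R}^{\mathrm{o}}:r_j\triangleright r_i\}$ and $r_i^{\triangleright}=(a\wedge\bigwedge_{r_j\in D(r_i)}\neg b(r_j),\,x)$ if $D(r_i)\neq\emptyset$, and $r_i^{\triangleright}=(a,x)$ otherwise; $\mathbf{R}^{\mathrm{o}}_{\triangleright}=\{r^{\triangleright}:r\in\mathbf{R}^{\mathrm{o}}\}$. *)

From Stdlib Require Import List ClassicalEpsilon.
Import ListNotations.

Inductive form : Type :=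
| Var : nat -> form
| Top : form
| Bot : form
| Neg : form -> form
| And : form -> form -> form
| Or  : form -> form -> form
| Imp : form -> form -> form.

Definition valuation := nat -> bool.

Fixpoint eval (f : form) (v : valuation) : bool :=
  match f with
  | Var n => v n
  | Top => true
  | Bot => false
  | Neg g => negb (eval g v)
  | And g h => andb (eval g v) (eval h v)
  | Or g h => orb (eval g v) (eval h v)
  | Imp g h => orb (negb (eval g v)) (eval h v)
  end.

Definition pl_entails (S : form -> Prop) (x : form) : Prop :=
  forall v : valuation, (forall f, S f -> eval f v = true) -> eval x v = true.

Definition pl_consistent (A : form) : Prop := ~ pl_entails (fun f => f = A) Bot.

Definition pl_consistent_set (S : form -> Prop) : Prop := ~ pl_entails S Bot.

(** S5 entailment, restricted to the Boolean (modality-free) fragment, which is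
    all that is needed here since Gamma is empty and heads are Boolean: truth at
    every world of every S5 Kripke model (universal accessibility; Boolean
    formulas are evaluated locally at the world). *)
Definition s5_entails_bool (S : form -> Prop) (x : form) : Prop :=
  forall (W : Type) (val : W -> valuation) (w : W),
    (forall f, S f -> eval f (val w) = true) -> eval x (val w) = true.

(** Obligations O(B/A) are represented as pairs (A, B): body A, head B. *)
Definition obligation := (form * form)%type.
Definition body (r : obligation) : form := fst r.
Definition head (r : obligation) : form := snd r.

(** Overriding relation r_j |> r_i relative to Gamma = empty (Gamma adds no
    premises to condition (i)). *)
Definition overrides (rj ri : obligation) : Prop :=
  s5_entails_bool (fun f => f = head ri \/ f = head rj) Bot /\
  pl_entails (fun f => f = body rj) (body ri) /\
  ~ pl_entails (fun f => f = body ri) (body rj) /\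
  ~ pl_entails (fun f => f = head ri \/ f = body rj) Bot.

Definition asb (P : Prop) : bool :=
  if excluded_middle_informative P then true else false.

Definition Dset (Ro : list obligation) (ri : obligation) : list obligation :=
  filter (fun rj => asb (In rj Ro /\ overrides rj ri)) Ro.

Fixpoint bigAnd (l : list form) : form :=
  match l with
  | [] => Top
  | [f] => f
  | f :: l' => And f (bigAnd l')
  end.

Definition norm := (form * form)%type.

Definition tr (Ro : list obligation) (ri : obligation) : norm :=
  match Dset Ro ri with
  | [] => (body ri, head ri)
  | D => (And (body ri) (bigAnd (map (fun rj => Neg (body rj)) D)), head ri)
  end.

Definition Ro_tr (Ro : list obligation) : norm -> Prop :=
  fun n => exists r, In r Ro /\ n = tr Ro r.

(** A model: a nonempty set of worlds W with a valuation.  succeq_N is W x W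
    (it plays no role for the Hanssonian operator) and succeq_I is determined
    by the violation sets below. *)
Record RModel : Type := {
  world : Type;
  world_ne : inhabited world;
  vl : world -> valuation
}.

Definition holds (M : RModel) (w : world M) (A : form) : Prop :=
  eval A (vl M w) = true.

Definition viol (Ro : list obligation) (M : RModel) (w : world M)
  (ri : obligation) : Prop :=
  In ri Ro /\ holds M w (body ri) /\ ~ holds M w (head ri) /\
  (forall rj, In rj Ro -> overrides rj ri -> ~ holds M w (body rj)).

Definition geI (Ro : list obligation) (M : RModel) (w1 w2 : world M) : Prop :=
  forall r, viol Ro M w1 r -> viol Ro M w2 r.

Definition succeqN (M : RModel) (w1 w2 : world M) : Prop := True.

Definition maxr {W : Type} (ge : W -> W -> Prop) (X : W -> Prop) : W -> Prop :=
  fun w => X w /\ forall u, X u -> ge u w -> ge w u.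

Definition truthset (M : RModel) (A : form) : world M -> Prop :=
  fun w => holds M w A.

Definition hansson (Ro : list obligation) (M : RModel) (w : world M)
  (x a : form) : Prop :=
  forall u, maxr (geI Ro M) (truthset M a) u -> truthset M x u.

Definition replete (M : RModel) : Prop :=
  forall A : form, pl_consistent A -> exists w : world M, holds M w A.

(** (empty, R) |~ O_H(x/a), over replete R-ordered models (Gamma is empty, so
    every world satisfies Gamma). *)
Definition entails_H (Ro : list obligation) (x a : form) : Prop :=
  forall M : RModel, replete M -> forall w : world M, hansson Ro M w x a.

Definition out4p (H : norm -> Prop) (a : form) : form -> Prop :=
  fun x => pl_entails (fun f => f = a \/ exists n, H n /\ f = Imp (fst n) (snd n)) x.

Definition subsetN (H1 H2 : norm -> Prop) : Prop := forall n, H1 n -> H2 n.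

Definition io_cons (H : norm -> Prop) (a : form) (C : form -> Prop) : Prop :=
  pl_consistent_set (fun f => out4p H a f \/ C f).

Definition maxf (N : norm -> Prop) (a : form) (C : form -> Prop)
  (H : norm -> Prop) : Prop :=
  subsetN H N /\ io_cons H a C /\
  (forall H', subsetN H H' -> subsetN H' N -> io_cons H' a C -> subsetN H' H).

Definition cap_outf (N : norm -> Prop) (a : form) (C : form -> Prop)
  (x : form) : Prop :=
  forall H, maxf N a C H -> out4p H a x.

From Pilot Require Import Defs.
From Stdlib Require Import List.
From Stdlib Require Import Classical ClassicalEpsilon Lia Bool.

(* Both sides say that x holds at every valuation satisfying a whose violation
   set is inclusion-minimal among such valuations.  On the semantic side, the
   model of all valuations is replete, and conversely a replete model realises
   every valuation on the finitely many letters the obligations and a mention.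
   On the I/O side, the translated norm r^|> holds at v exactly when r is not
   violated at v (the exceptions of overriding obligations sit in its body), so
   the maximal a-consistent subsets of Ro_|> are the sets of translated norms
   holding at such a minimal valuation. *)

Definition violated (Ro : list obligation) (v : valuation) (r : obligation) : Prop :=
  In r Ro /\ eval (body r) v = true /\ eval (Defs.head r) v <> true /\
  (forall rj, In rj Ro -> overrides rj r -> eval (body rj) v <> true).

Definition best (Ro : list obligation) (a : form) (v : valuation) : Prop :=
  eval a v = true /\
  forall u, eval a u = true ->
    (forall r, violated Ro u r -> violated Ro v r) ->
    forall r, violated Ro v r -> violated Ro u r.

Definition agree_below (K : nat) (v v' : valuation) : Prop :=
  forall n, n < K -> v n = v' n.

Fixpoint letter_bound (f : form) : nat :=
  match f with
  | Var n => S n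
  | Top | Bot => 0
  | Neg g => letter_bound g
  | And g h | Or g h | Imp g h => Nat.max (letter_bound g) (letter_bound h)
  end.

Lemma eval_agree_below f K v v' :
  letter_bound f <= K -> agree_below K v v' -> eval f v = eval f v'.
Proof.
  intros Hf Hvv'; induction f; simpl in *; try reflexivity.
  - apply Hvv'; lia.
  - rewrite IHf; auto.
  - rewrite IHf1, IHf2; auto; lia.
  - rewrite IHf1, IHf2; auto; lia.
  - rewrite IHf1, IHf2; auto; lia.
Qed.

Definition obligations_bound (Ro : list obligation) : nat :=
  fold_right (fun r K =>
    Nat.max (Nat.max (letter_bound (body r)) (letter_bound (Defs.head r))) K) 0 Ro.

Lemma obligations_bound_In Ro r : In r Ro ->
  letter_bound (body r) <= obligations_bound Ro /\
  letter_bound (Defs.head r) <= obligations_bound Ro.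
Proof.
  induction Ro as [|r' Ro IH]; simpl; intros Hr; [contradiction|].
  destruct Hr as [<-|Hr]; [lia|].
  specialize (IH Hr); lia.
Qed.

Lemma violated_agree_below Ro K v v' r :
  obligations_bound Ro <= K -> agree_below K v v' ->
  violated Ro v r -> violated Ro v' r.
Proof.
  intros HK Hvv' [Hr [Hb [Hh Hov]]].
  assert (Heval : forall f, letter_bound f <= obligations_bound Ro -> eval f v = eval f v').
  { intros f Hf; apply (eval_agree_below f K); auto; lia. }
  destruct (obligations_bound_In Ro r Hr) as [Hbr Hhr].
  split; [exact Hr|].
  rewrite <- !Heval by assumption.
  split; [exact Hb|]; split; [exact Hh|].
  intros rj Hrj Hjr; rewrite <- Heval by apply (obligations_bound_In Ro rj Hrj).
  auto.
Qed.

Fixpoint state_description (u : valuation) (k : nat) : form :=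
  match k with
  | 0 => Top
  | S k => And (state_description u k) (if u k then Var k else Neg (Var k))
  end.

Lemma eval_state_description u k v :
  eval (state_description u k) v = true <-> agree_below k v u.
Proof.
  unfold agree_below; induction k as [|k IH]; simpl.
  - split; intros; [lia|reflexivity].
  - rewrite andb_true_iff, IH; split.
    + intros [Hlt Hk] n Hn.
      destruct (PeanoNat.Nat.eq_dec n k) as [->|Hne]; [|apply Hlt; lia].
      destruct (u k); simpl in Hk; [exact Hk | exact (proj1 (negb_true_iff _) Hk)].
    + intros Hle; split; [intros n Hn; apply Hle; lia|].
      destruct (u k) eqn:Huk; simpl; rewrite (Hle k), Huk by lia; reflexivity.
Qed.

Lemma replete_realizes M u K : replete M ->
  exists w : world M, agree_below K (vl M w) u.
Proof.
  intros HM; destruct (HM (state_description u K)) as [w Hw].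
  - intros Hincons; discriminate (Hincons u).
    intros f ->; apply eval_state_description; intros n _; reflexivity.
  - exists w; apply eval_state_description, Hw.
Qed.

Definition valuation_model : RModel :=
  {| world := valuation; world_ne := inhabits (fun _ => true); vl := fun v => v |}.

Lemma valuation_model_replete : replete valuation_model.
Proof.
  intros A HA; apply NNPP; intros Hnone.
  apply HA; intros v Hv; exfalso.
  apply Hnone; exists v; apply Hv; reflexivity.
Qed.

Lemma best_of_maxr Ro a M w : replete M ->
  maxr (geI Ro M) (truthset M a) w -> best Ro a (vl M w).
Proof.
  intros HM [Haw Hmax]; split; [exact Haw|].
  intros u Hau Hsub.
  set (K := Nat.max (letter_bound a) (obligations_bound Ro)).
  destruct (replete_realizes M u K HM) as [w' Hw'].
  assert (Hbound : obligations_bound Ro <= K) by lia.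
  assert (Haw' : truthset M a w').
  { unfold truthset, holds; rewrite (eval_agree_below a K _ u); auto; lia. }
  assert (Hge : geI Ro M w' w).
  { intros r Hr; apply Hsub, (violated_agree_below Ro K (vl M w')); auto. }
  intros r Hr; apply (violated_agree_below Ro K (vl M w')); auto.
  exact (Hmax w' Haw' Hge r Hr).
Qed.

Lemma entails_H_iff_best Ro a x :
  entails_H Ro x a <-> forall v, best Ro a v -> eval x v = true.
Proof.
  split.
  - intros Hent v Hv; exact (Hent valuation_model valuation_model_replete v v Hv).
  - intros Hbest M HM w u Hu; exact (Hbest _ (best_of_maxr Ro a M u HM Hu)).
Qed.

Definition sat (v : valuation) (n : norm) : Prop :=
  eval (Imp (fst n) (snd n)) v = true.

Definition io_model (H : norm -> Prop) (a : form) (v : valuation) : Prop :=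
  eval a v = true /\ forall n, H n -> sat v n.

Lemma out4p_iff H a x :
  out4p H a x <-> forall v, io_model H a v -> eval x v = true.
Proof.
  split.
  - intros Hx v [Ha Hs]; apply Hx; intros f [->|[n [Hn ->]]]; [exact Ha | exact (Hs n Hn)].
  - intros Hx v Hv; apply Hx; split.
    + apply Hv; auto.
    + intros n Hn; apply Hv; eauto.
Qed.

Lemma io_cons_iff H a :
  io_cons H a (fun f => f = a) <-> exists v, io_model H a v.
Proof.
  split.
  - intros Hcons; apply NNPP; intros Hnone.
    apply Hcons; intros v Hv; exfalso.
    apply Hnone; exists v; split; [apply Hv; auto|].
    intros n Hn; apply Hv; left; apply out4p_iff.
    intros v' [_ Hs]; exact (Hs n Hn).
  - intros [v Hv] Hincons; discriminate (Hincons v).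
    intros f [Hf| ->]; [exact (proj1 (out4p_iff H a f) Hf v Hv) | exact (proj1 Hv)].
Qed.

Lemma eval_bigAnd l v :
  eval (bigAnd l) v = true <-> forall f, In f l -> eval f v = true.
Proof.
  induction l as [|f [|g l] IH].
  - split; [contradiction|reflexivity].
  - simpl; split; [intros Hf f' [<-|[]]; exact Hf | auto].
  - change (eval f v && eval (bigAnd (g :: l)) v = true <->
            forall f', In f' (f :: g :: l) -> eval f' v = true).
    rewrite andb_true_iff, IH; simpl; intuition (subst; auto).
Qed.

Lemma In_Dset Ro r rj : In rj (Dset Ro r) <-> In rj Ro /\ overrides rj r.
Proof.
  unfold Dset, asb; rewrite filter_In.
  destruct excluded_middle_informative; intuition discriminate.
Qed.

Lemma eval_tr_body Ro r v :
  eval (fst (tr Ro r)) v = true <->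
  eval (body r) v = true /\ forall rj, In rj (Dset Ro r) -> eval (body rj) v <> true.
Proof.
  unfold tr; destruct (Dset Ro r) as [|d l]; cbn [fst eval].
  - intuition.
  - rewrite andb_true_iff, eval_bigAnd.
    setoid_rewrite in_map_iff.
    split; intros [Hb Hexc]; split; auto.
    + intros rj Hrj; specialize (Hexc (Neg (body rj)) (ex_intro _ rj (conj eq_refl Hrj))).
      simpl in Hexc; destruct (eval (body rj) v); simpl in *; congruence.
    + intros f [rj [<- Hrj]]; specialize (Hexc rj Hrj); simpl.
      destruct (eval (body rj) v); simpl in *; congruence.
Qed.

Lemma sat_tr Ro r v : In r Ro -> sat v (tr Ro r) <-> ~ violated Ro v r.
Proof.
  intros Hr; unfold sat, violated; cbn [eval].
  rewrite orb_true_iff, negb_true_iff, <- not_true_iff_false, eval_tr_body.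
  replace (snd (tr Ro r)) with (Defs.head r) by (unfold tr; destruct (Dset Ro r); reflexivity).
  setoid_rewrite In_Dset.
  destruct (classic (eval (Defs.head r) v = true)); firstorder.
Qed.

Definition satisfied_norms (Ro : list obligation) (v : valuation) : norm -> Prop :=
  fun n => Ro_tr Ro n /\ sat v n.

Lemma satisfied_norms_incl Ro u v :
  subsetN (satisfied_norms Ro u) (satisfied_norms Ro v) <->
  (forall r, violated Ro v r -> violated Ro u r).
Proof.
  split.
  - intros Hsub r Hv; apply NNPP; intros Hu.
    assert (Hr : In r Ro) by apply Hv.
    refine (proj1 (sat_tr Ro r v Hr) _ Hv).
    apply Hsub; split; [exists r; auto | apply sat_tr; auto].
  - intros Hviol n [[r [Hr ->]] Hs]; split; [exists r; auto|].
    apply sat_tr; auto; intros Hv.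
    exact (proj1 (sat_tr Ro r u Hr) Hs (Hviol r Hv)).
Qed.

Lemma io_model_satisfied_norms Ro a v :
  eval a v = true -> io_model (satisfied_norms Ro v) a v.
Proof. intros Ha; split; [exact Ha | intros n [_ Hs]; exact Hs]. Qed.

Lemma maxf_satisfied_norms Ro a v : best Ro a v ->
  maxf (Ro_tr Ro) a (fun f => f = a) (satisfied_norms Ro v).
Proof.
  intros [Ha Hmin]; split; [intros n [Hn _]; exact Hn|]; split.
  - apply io_cons_iff; exists v; apply io_model_satisfied_norms, Ha.
  - intros H' Hv_H' HH' Hcons.
    apply io_cons_iff in Hcons as [u [Hau Hsu]].
    assert (HH'u : subsetN H' (satisfied_norms Ro u)).
    { intros n Hn; split; auto. }
    assert (Huv : forall r, violated Ro u r -> violated Ro v r).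
    { apply satisfied_norms_incl; intros n Hn; apply HH'u, Hv_H', Hn. }
    intros n Hn; apply (satisfied_norms_incl Ro u v); auto.
Qed.

Lemma best_of_maxf Ro a H u :
  maxf (Ro_tr Ro) a (fun f => f = a) H -> io_model H a u -> best Ro a u.
Proof.
  intros [HRo [_ Hmax]] [Ha Hs]; split; [exact Ha|].
  intros u' Ha' Hsub.
  assert (HHu : subsetN H (satisfied_norms Ro u)).
  { intros n Hn; split; auto. }
  assert (HHu' : subsetN H (satisfied_norms Ro u')).
  { intros n Hn; apply (satisfied_norms_incl Ro u u'); auto. }
  apply satisfied_norms_incl; intros n Hn.
  apply HHu, (Hmax (satisfied_norms Ro u')); auto.
  - intros m [Hm _]; exact Hm.
  - apply io_cons_iff; exists u'; apply io_model_satisfied_norms, Ha'.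
Qed.

Lemma cap_outf_iff_best Ro a x :
  cap_outf (Ro_tr Ro) a (fun f => f = a) x <-> forall v, best Ro a v -> eval x v = true.
Proof.
  split.
  - intros Hcap v Hv.
    apply (proj1 (out4p_iff _ a x) (Hcap _ (maxf_satisfied_norms Ro a v Hv))).
    apply io_model_satisfied_norms, Hv.
  - intros Hbest H HH; apply out4p_iff; intros u Hu.
    exact (Hbest u (best_of_maxf Ro a H u HH Hu)).
Qed.

Theorem theorem3 (Ro : list obligation) (a x : form) :
  entails_H Ro x a <-> cap_outf (Ro_tr Ro) a (fun f => f = a) x.
Proof.
  rewrite entails_H_iff_best, cap_outf_iff_best; reflexivity.
Qed.
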